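(* Let $n\ge1$ and $\vec p,\vec q\in[0,1]^n$. Let $S_{\vec p}$ be a sum of $n$ independent random variables $X_i\sim\mathrm{Ber}(p_i)$, and similarly $S_{\vec q}$, with variances $\sigma_{\vec p}^2=\sum_ip_i(1-p_i)$ and $\sigma_{\vec q}^2=\sum_iq_i(1-q_i)$, and let $\Delta=\sum_{i=1}^n|p_i-q_i|$. Then $$\mathrm{TV}(S_{\vec p},S_{\vec q})\le\frac{2C_{\mathrm{BCV}}\,\Delta}{\sqrt{\sigma_{\vec p}^2+1}+\sqrt{\sigma_{\vec q}^2+1}}.$$
   Context: $\mathrm{TV}(P,Q)=\frac12\sum_\omega|P(\omega)-Q(\omega)|$ is the total variation distance of laws. $\eta_{\mathrm{BCV}}$ is the sharp Baillon–Cominetti–Vaisman constant: the smallest constant such that every finite sum $Z$ of independent Bernoulli random variables with $\mathrm{Var}(Z)>0$ satisfies $\max_k\mathbb P(Z=k)\le\eta_{\mathrm{BCV}}/\sqrt{\mathrm{Var}(Z)}$ ($\eta_{\mathrm{BCV}}\approx0.4688$). $C_{\mathrm{BCV}}=\sqrt{5/4+\eta_{\mathrm{BCV}}^2}$. *)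

From HB Require Import structures.
From mathcomp Require Import all_boot all_order all_algebra.
From mathcomp Require Import classical_sets reals.
Set Implicit Arguments. Unset Strict Implicit. Unset Printing Implicit Defensive.
Import Order.TTheory GRing.Theory Num.Theory.
Local Open Scope ring_scope.
Local Open Scope classical_set_scope.

(* Law of S_p = X_1 + ... + X_n with X_i ~ Ber(p_i) independent:
   the joint law of (X_1,...,X_n) is the product measure on {0,1}^n,
   and P(S_p = k) is the mass of the outcomes x with sum_i x_i = k. *)
Definition pbin {R : realType} {n : nat} (p : 'I_n -> R) (k : nat) : R :=
  \sum_(x : {ffun 'I_n -> bool} | (\sum_(i < n) nat_of_bool (x i) == k)%N)
     \prod_(i < n) (if x i then p i else 1 - p i).

Definition pvar {R : realType} {n : nat} (p : 'I_n -> R) : R :=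
  \sum_(i < n) p i * (1 - p i).

(* Total variation distance between the laws of S_p and S_q
   (both supported on {0,...,n}). *)
Definition TV_pb {R : realType} {n : nat} (p q : 'I_n -> R) : R :=
  2^-1 * \sum_(k < n.+1) `|pbin p k - pbin q k|.

Definition pmax {R : realType} {n : nat} (p : 'I_n -> R) : R :=
  \big[Num.max/0]_(k < n.+1) pbin p k.

(* eta_BCV: the smallest constant eta such that every finite sum Z of
   independent Bernoullis with Var Z > 0 satisfies
   max_k P(Z=k) <= eta / sqrt(Var Z); i.e. the supremum of
   max_k P(Z=k) * sqrt(Var Z) over all such Z. *)
Definition eta_BCV {R : realType} : R :=
  sup [set x : R | exists (m : nat) (p : 'I_m -> R),
         (forall i, 0 <= p i <= 1) /\ 0 < pvar p /\
         x = pmax p * Num.sqrt (pvar p)].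

Definition C_BCV {R : realType} : R :=
  Num.sqrt (5 / 4 + (@eta_BCV R) ^+ 2).

From HB Require Import structures.
From mathcomp Require Import all_boot all_order all_algebra.
From mathcomp Require Import classical_sets boolp reals ring lra.
Set Implicit Arguments. Unset Strict Implicit. Unset Printing Implicit Defensive.
Import Order.TTheory GRing.Theory Num.Theory.
Local Open Scope ring_scope.

(** Move from [p] to [q] along the segment [t |-> p + t (q - p)], cut into [N]
    steps, each step moving one coordinate at a time. Moving coordinate [i] by [e]
    changes the law of the sum by [e] times the discrete derivative of the law of
    the other summands; since Poisson binomial laws are unimodal, that derivative
    has l1 norm twice the mode, and the mode is at most [min(1, eta / sqrt v)]
    <= [C / sqrt (v + 5/4)], where removing one summand costs at most [1/4] of
    variance. The variance is concave along the segment, so the steps add up to a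
    Riemann sum of [C Delta / sqrt (Var_t + 1)] with [Var_t + 1] at least the
    linear interpolation of [Var p + 1] and [Var q + 1]; its integral over [0,1]
    is [2 C Delta / (sqrt (Var p + 1) + sqrt (Var q + 1))], and [N -> oo].

    That [eta_BCV] is finite (so that the supremum defining it bounds the mode)
    follows from a Nash-type inequality for the collision probability
    [Q = sum_k P(S = k)^2]: adding a summand of variance [g] lowers [Q] by
    [g sum_k (P(S=k) - P(S=k-1))^2 >= g Q^3 / 4], whence [Q^2 (1 + Var/2) <= 1];
    splitting the summands into two halves of nearly equal variance then bounds
    [P(S = k)^2 Var] by [8]. *)

Definition in01 {R : realType} (a : R) : bool := 0 <= a <= 1.

Section NatSequences.
Context {R : realType}.
Implicit Types (c : nat -> R).

Definition shift1 c (k : nat) : R := if k is k'.+1 then c k' else 0.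
Definition diff1 c (k : nat) : R := c k - shift1 c k.

Lemma sum_shift1 c N : \sum_(k < N.+1) shift1 c k = \sum_(k < N) c k.
Proof. by rewrite big_ord_recl add0r. Qed.

Lemma sum_ord_widen0 c M N : (M <= N)%N ->
  (forall k, (M <= k)%N -> c k = 0) -> \sum_(k < N) c k = \sum_(k < M) c k.
Proof.
move=> hMN hc; rewrite -!(big_mkord xpredT c) (big_cat_nat (leq0n M) hMN) /=.
rewrite [X in _ + X]big1_seq ?addr0 // => k /andP[_].
by rewrite mem_index_iota => /andP[/hc].
Qed.

Lemma sum_ord_widen_le c M N : (M <= N)%N ->
  (forall k, 0 <= c k) -> \sum_(k < M) c k <= \sum_(k < N) c k.
Proof.
move=> hMN hc; rewrite -!(big_mkord xpredT c) (big_cat_nat (leq0n M) hMN) /=.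
by rewrite lerDl sumr_ge0.
Qed.

Lemma exists_argmax c N : exists2 m, (m <= N)%N & forall k, (k <= N)%N -> c k <= c m.
Proof.
elim: N => [|N [m hm hmax]]; first by exists 0%N => // k; rewrite leqn0 => /eqP->.
have [hle|hlt] := lerP (c N.+1) (c m).
  by exists m => [|k]; [exact: leqW | rewrite leq_eqVlt => /orP[/eqP->|/hmax]].
exists N.+1 => // k; rewrite leq_eqVlt => /orP[/eqP->//|/hmax hk].
exact: le_trans hk (ltW hlt).
Qed.

Lemma sqr_le_sum_diff1 c m N : (forall k, 0 <= c k) -> (m < N)%N ->
  c m ^+ 2 <= \sum_(k < N) `|diff1 c k| * (c k + shift1 c k).
Proof.
move=> c0 hmN; pose f := shift1 (fun k => c k ^+ 2).
have -> : c m ^+ 2 = \sum_(k < m.+1) (f k.+1 - f k).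
  by rewrite -(big_mkord xpredT (fun k => f k.+1 - f k)) telescope_sumr // /f subr0.
have hs0 k : 0 <= c k + shift1 c k by apply: addr_ge0 => //; case: k.
have hg k : 0 <= `|diff1 c k| * (c k + shift1 c k) by rewrite mulr_ge0.
apply: le_trans (sum_ord_widen_le hmN hg).
apply: ler_sum => k _; have -> : f k.+1 - f k = diff1 c k * (c k + shift1 c k).
  by rewrite /f /diff1; case: (nat_of_ord k) => [|j] /=; ring.
by apply: ler_wpM2r; rewrite ?ler_norm.
Qed.

Lemma sum_abs_diff1_unimodal c m N : (forall k, 0 <= c k) ->
  (forall k, (k <= m)%N -> 0 <= diff1 c k) -> (forall k, (m < k)%N -> diff1 c k <= 0) ->
  \sum_(k < N) `|diff1 c k| <= 2 * c m.
Proof.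
move=> c0 hu hd; set N' := maxn N m.+1.
apply: le_trans (sum_ord_widen_le (leq_maxl N m.+1) (fun k => normr_ge0 (diff1 c k))) _.
rewrite -(big_mkord xpredT (fun k => `|diff1 c k|)).
rewrite (big_cat_nat (leq0n m.+1) (leq_maxr N m.+1)) /=.
have Eup : \sum_(0 <= k < m.+1) `|diff1 c k|
    = \sum_(0 <= k < m.+1) (shift1 c k.+1 - shift1 c k).
  by apply: eq_big_nat => k /andP[_ hk]; rewrite ger0_norm //; apply: hu; rewrite -ltnS.
have Edn : \sum_(m.+1 <= k < N') `|diff1 c k|
    = - \sum_(m.+1 <= k < N') (shift1 c k.+1 - shift1 c k).
  by rewrite -sumrN; apply: eq_big_nat => k /andP[hk _]; rewrite ler0_norm ?hd.
rewrite Eup Edn !telescope_sumr ?leq_maxr //=.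
have : 0 <= shift1 c N' by case: (N').
lra.
Qed.

End NatSequences.

Section RealInequalities.
Context {R : realType}.

Lemma sqrt_ge1 (M : R) : 1 <= M -> 1 <= Num.sqrt M.
Proof. by move=> hM; rewrite -sqrtr1 ler_sqrt //; lra. Qed.

Lemma ler_div_sqrt (c x y : R) : 0 <= c -> 0 < x -> x <= y ->
  c / Num.sqrt y <= c / Num.sqrt x.
Proof.
move=> c0 x0 hxy; have y0 : 0 < y by apply: lt_le_trans hxy.
by apply: ler_wpM2l => //; rewrite lef_pV2 ?posrE ?sqrtr_gt0 // ler_sqrt // (ltW y0).
Qed.

Lemma inv_sqrt_sub_le (M eps : R) : 1 <= M -> 0 <= eps <= 2^-1 ->
  (Num.sqrt (M - eps))^-1 <= (Num.sqrt M)^-1 + 2 * eps.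
Proof.
move=> hM /andP[e0 e1]; set u := Num.sqrt (M - eps); set x := Num.sqrt M.
have hu2 : u ^+ 2 = M - eps by rewrite sqr_sqrtr //; lra.
have hx2 : x ^+ 2 = M by rewrite sqr_sqrtr //; lra.
have u0 : 0 <= u by apply: sqrtr_ge0.
have x0 : 0 <= x by apply: sqrtr_ge0.
have x1 : 1 <= x by rewrite /x -sqrtr1 ler_sqrt //; lra.
have u1 : 2^-1 <= u.
  by rewrite -ler_sqr ?nnegrE ?invr_ge0 // hu2; lra.
have hxu : u <= x by rewrite -ler_sqr ?nnegrE // hu2 hx2; lra.
have hdiff : x - u <= eps.
  have : (x - u) * (x + u) = eps by rewrite -subr_sqr hx2 hu2; ring.
  have : 0 <= (x - u) * (x + u - 1) by apply: mulr_ge0; lra.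
  nra.
have hux : 1 <= 2 * u * x by nra.
rewrite -subr_le0 -[u^-1]div1r -[x^-1]div1r.
have -> : 1 / u - (1 / x + 2 * eps) = (x - u - 2 * eps * u * x) / (u * x) by field; lra.
by rewrite mulr_le0_ge0 ?invr_ge0 ?mulr_ge0 //; nra.
Qed.

(* If [M] is affine with [M 0 = x^2] and [M h = y^2], then [2 h / (x + y)] is the
   integral of [1 / sqrt M] over [[0, h]], and [h / x] is its left Riemann term. *)
Lemma left_riemann_term_le (x y h D : R) : 1 <= x -> 1 <= y -> 0 <= h ->
  y ^+ 2 - x ^+ 2 = h * D -> h / x <= 2 * h / (x + y) + h ^+ 2 * `|D|.
Proof.
move=> x1 y1 h0 hD; have xy0 : 0 < x + y by lra.
have -> : h / x = 2 * h / (x + y) + h ^+ 2 * D / (x * (x + y) * (x + y)).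
  have -> : h ^+ 2 * D = h * ((y - x) * (y + x)) by rewrite -subr_sqr hD; ring.
  by field; lra.
rewrite lerD2l ler_pdivrMr; last by rewrite !mulr_gt0 //; lra.
have : 1 <= x * (x + y) * (x + y) by nra.
have : h ^+ 2 * D <= h ^+ 2 * `|D| by rewrite ler_wpM2l ?sqr_ge0 ?ler_norm.
have := mulr_ge0 (sqr_ge0 h) (normr_ge0 D); nra.
Qed.

Lemma le_add_div_nat (x y K D : R) : 0 <= K -> 0 <= D ->
  (forall N : nat, D < N%:R -> x <= y + K / N%:R) -> x <= y.
Proof.
move=> K0 D0 hxy; apply/ler_addgt0Pr => e e0.
have hKe : 0 <= K / e by rewrite divr_ge0 // ltW.
pose N := Num.Def.archi_bound (K / e + D).
have hN : K / e + D < N%:R by apply: archi_boundP; lra.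
have N0 : 0 < N%:R :> R by lra.
apply: le_trans (hxy N _) _; first lra.
by rewrite lerD2l ler_pdivrMr // mulrC -ler_pdivrMr //; lra.
Qed.

End RealInequalities.

Section PoissonBinomial.
Context {R : realType}.
Implicit Types (a : R) (s : seq R).

(* Laws are encoded by probability generating polynomials: [pb_mass s k] is the
   probability that a sum of independent Bernoulli variables with parameters [s]
   equals [k] (lemma [pbinE]). *)
Definition bern_poly a : {poly R} := a *: 'X + (1 - a)%:P.
Definition pb_poly s : {poly R} := \prod_(a <- s) bern_poly a.
Definition pb_mass s (k : nat) : R := (pb_poly s)`_k.
Definition pb_var s : R := \sum_(a <- s) a * (1 - a).

Lemma coef_bern_polyM a (P : {poly R}) k :
  (bern_poly a * P)`_k = (1 - a) * P`_k + a * shift1 (fun j => P`_j) k.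
Proof. by rewrite mulrDl -scalerAl coefD coefZ coefXM coefCM addrC; case: k. Qed.

Lemma pb_mass_nil k : pb_mass [::] k = (k == 0)%:R.
Proof. by rewrite /pb_mass /pb_poly big_nil coef1. Qed.

Lemma pb_mass_cons a s k :
  pb_mass (a :: s) k = (1 - a) * pb_mass s k + a * shift1 (pb_mass s) k.
Proof. by rewrite /pb_mass /pb_poly big_cons coef_bern_polyM. Qed.

Lemma pb_mass_gt_size s k : (size s < k)%N -> pb_mass s k = 0.
Proof.
elim: s k => [|a s IH] [|k] //= hk; first by rewrite pb_mass_nil.
by rewrite pb_mass_cons /= !IH ?mulr0 ?addr0 // ltnW.
Qed.

Lemma pb_mass_ge0 s k : all in01 s -> 0 <= pb_mass s k.
Proof.
elim: s k => [|a s IH] k; first by rewrite pb_mass_nil ler0n.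
move=> /= /andP[/andP[a0 a1] hs]; rewrite pb_mass_cons.
have : 0 <= shift1 (pb_mass s) k by case: k => //= k; apply: IH.
have := IH k hs; nra.
Qed.

Lemma sum_pb_mass s N : all in01 s -> (size s < N)%N -> \sum_(k < N) pb_mass s k = 1.
Proof.
elim: s N => [|a s IH] [|N] //= hs hN.
  by rewrite big_ord_recl pb_mass_nil big1 ?addr0 // => i _; rewrite pb_mass_nil.
case/andP: hs => _ hs; under eq_bigr do rewrite pb_mass_cons.
rewrite big_split -!mulr_sumr /= sum_shift1 !IH ?(ltn_trans _ hN) //.
by rewrite !mulr1 subrK.
Qed.

Lemma pb_mass_le1 s k : all in01 s -> pb_mass s k <= 1.
Proof.
move=> hs; have [/pb_mass_gt_size ->//|hk] := ltnP (size s) k.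
rewrite -(@sum_pb_mass s (size s).+1 hs) //.
rewrite (bigD1 (Ordinal (hk : k < (size s).+1)%N)) //=.
by rewrite lerDl sumr_ge0 // => i _; apply: pb_mass_ge0.
Qed.

Lemma bern_var_ge0 a : in01 a -> 0 <= a * (1 - a).
Proof. by move=> /andP[a0 a1]; apply: mulr_ge0; lra. Qed.

Lemma bern_var_le a : a * (1 - a) <= 4^-1.
Proof. by have := sqr_ge0 (a - 2^-1); lra. Qed.

Lemma pb_var_cons a s : pb_var (a :: s) = a * (1 - a) + pb_var s.
Proof. by rewrite /pb_var big_cons. Qed.

Lemma pb_var_ge0 s : all in01 s -> 0 <= pb_var s.
Proof.
by move=> /allP hs; rewrite /pb_var big_seq; apply: sumr_ge0 => a /hs/bern_var_ge0.
Qed.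

Lemma pbin_coef_prod n (p : 'I_n -> R) k :
  pbin p k = (\prod_(i < n) bern_poly (p i))`_k.
Proof.
pose G (i : 'I_n) (b : bool) : {poly R} :=
  (if b then p i else 1 - p i)%:P * 'X^(nat_of_bool b).
have -> : \prod_(i < n) bern_poly (p i) = \prod_(i < n) \sum_(b : bool) G i b.
  by apply: eq_bigr => i _; rewrite big_bool /G /= expr1 expr0 mulr1 mul_polyC.
rewrite bigA_distr_bigA /= coef_sum /pbin [in LHS]big_mkcond /=.
apply: eq_bigr => x _; rewrite /G big_split /= -rmorph_prod prodrXr coefCM coefXn.
by rewrite eq_sym; case: eqP => _; rewrite ?mulr1 ?mulr0.
Qed.

Lemma pbinE n (p : 'I_n -> R) k : pbin p k = pb_mass [seq p i | i <- enum 'I_n] k.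
Proof. by rewrite pbin_coef_prod /pb_mass /pb_poly big_map big_enum. Qed.

Lemma pvarE n (p : 'I_n -> R) : pvar p = pb_var [seq p i | i <- enum 'I_n].
Proof. by rewrite /pvar /pb_var big_map big_enum. Qed.

Lemma all_in01_map n (p : 'I_n -> R) :
  (forall i, in01 (p i)) -> all in01 [seq p i | i <- enum 'I_n].
Proof. by move=> hp; apply/allP => a /mapP[i _ ->]. Qed.

End PoissonBinomial.

Section CollisionProbability.
Context {R : realType}.
Implicit Types (a : R) (s : seq R).

Definition pb_coll s : R := \sum_(k < (size s).+1) pb_mass s k ^+ 2.
Definition pb_energy s : R := \sum_(k < (size s).+2) diff1 (pb_mass s) k ^+ 2.

Lemma pb_coll_ge0 s : 0 <= pb_coll s.
Proof. by apply: sumr_ge0 => k _; apply: sqr_ge0. Qed.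

Lemma sum_pb_mass_sqr s N : (size s < N)%N -> \sum_(k < N) pb_mass s k ^+ 2 = pb_coll s.
Proof.
move=> hN; rewrite (@sum_ord_widen0 _ (fun k => pb_mass s k ^+ 2) (size s).+1) // => k hk.
by rewrite pb_mass_gt_size // expr0n.
Qed.

Lemma sum_pb_mass_sqr_le s N : \sum_(k < N) pb_mass s k ^+ 2 <= pb_coll s.
Proof.
rewrite -(@sum_pb_mass_sqr s (N + (size s).+1)) ?ltn_addl //.
apply: (@sum_ord_widen_le _ (fun k => pb_mass s k ^+ 2)); first exact: leq_addr.
by move=> k; apply: sqr_ge0.
Qed.

Lemma pb_coll_cons a s : pb_coll (a :: s) = pb_coll s - a * (1 - a) * pb_energy s.
Proof.
set c := pb_mass s; pose c2 := shift1 (fun k => c k ^+ 2).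
have Esq k : pb_mass (a :: s) k ^+ 2 = (1 - a) ^+ 2 * c k ^+ 2 + a ^+ 2 * c2 k
    + 2 * a * (1 - a) * (c k * shift1 c k).
  by rewrite pb_mass_cons -/c /c2; case: k => [|k] /=; ring.
have Ed k : diff1 c k ^+ 2 = c k ^+ 2 + c2 k - 2 * (c k * shift1 c k).
  by rewrite /diff1 /c2; case: k => [|k] /=; ring.
rewrite /pb_coll /pb_energy -/c; under eq_bigr do rewrite Esq.
under [X in _ = _ - _ * X]eq_bigr do rewrite Ed.
rewrite !big_split /= sumrN -!mulr_sumr /c2 sum_shift1 !sum_pb_mass_sqr //.
by rewrite /pb_coll; ring.
Qed.

Lemma pb_coll_le_mass s m : all in01 s ->
  (forall k, (k <= size s)%N -> pb_mass s k <= pb_mass s m) -> pb_coll s <= pb_mass s m.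
Proof.
move=> hs hmax.
rewrite -[X in _ <= X]mul1r -(@sum_pb_mass _ s (size s).+1 hs) // mulr_suml.
apply: ler_sum => k _; rewrite expr2; apply: ler_wpM2l; first exact: pb_mass_ge0.
by apply: hmax; rewrite -ltnS.
Qed.

Lemma pb_coll_le1 s : all in01 s -> pb_coll s <= 1.
Proof.
move=> hs; have [m _ hmax] := exists_argmax (pb_mass s) (size s).
exact: le_trans (pb_coll_le_mass hs hmax) (pb_mass_le1 m hs).
Qed.

Lemma pb_coll_nash s : all in01 s -> pb_coll s ^+ 3 <= 4 * pb_energy s.
Proof.
move=> hs; set Q := pb_coll s; set c := pb_mass s; set N := (size s).+2.
have c0 k : 0 <= c k by apply: pb_mass_ge0.
have [m hm hmax] := exists_argmax c (size s).
have hQm : Q <= c m by apply: pb_coll_le_mass.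
have Q0 : 0 <= Q by apply: pb_coll_ge0.
pose T := \sum_(k < N) `|diff1 c k| * (c k + shift1 c k).
have hT : c m ^+ 2 <= T by apply: sqr_le_sum_diff1; rewrite // ltnS ltnW.
have hsum : \sum_(k < N) (c k + shift1 c k) ^+ 2 <= 4 * Q.
  apply: le_trans (_ : \sum_(k < N)
      (2 * c k ^+ 2 + 2 * shift1 (fun k => c k ^+ 2) k) <= _).
    apply: ler_sum => k _; case: (nat_of_ord k) => [|j] /=.
      by have := sqr_ge0 (c 0%N); lra.
    by have := sqr_ge0 (c j.+1 - c j); lra.
  by rewrite big_split /= -!mulr_sumr sum_shift1 !sum_pb_mass_sqr // -/Q; lra.
(* AM-GM, termwise: [Q |d| e <= 2 d^2 + Q^2 e^2 / 8]. *)
have hQT : Q * T <= 2 * pb_energy s + Q ^+ 3 / 2.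
  rewrite mulr_sumr; apply: le_trans (_ : \sum_(k < N)
      (2 * diff1 c k ^+ 2 + Q ^+ 2 / 8 * (c k + shift1 c k) ^+ 2) <= _).
    apply: ler_sum => k _; set d := diff1 c k; set e := c k + shift1 c k.
    have hd : `|d| ^+ 2 = d ^+ 2 by rewrite real_normK // num_real.
    have := sqr_ge0 (2 * `|d| - Q * e / 2); have := normr_ge0 d; nra.
  rewrite big_split /= -!mulr_sumr /pb_energy -/c -/N lerD2l.
  have -> : Q ^+ 3 / 2 = Q ^+ 2 / 8 * (4 * Q) by field.
  by apply: ler_wpM2l => //; apply: mulr_ge0; [apply: sqr_ge0 | lra].
have : Q ^+ 2 <= c m ^+ 2 by rewrite ler_sqr // nnegrE; apply: le_trans hQm.
nra.
Qed.

Lemma coll_step_le (Q D g v : R) : 0 <= Q <= 1 -> 0 <= g <= 4^-1 -> 0 <= v ->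
  Q ^+ 3 <= 4 * D -> 0 <= Q - g * D -> Q ^+ 2 * (1 + v / 2) <= 1 ->
  (Q - g * D) ^+ 2 * (1 + (g + v) / 2) <= 1.
Proof.
move=> /andP[Q0 Q1] /andP[g0 g1] v0 hnash hQ' hQv; set x := g * Q ^+ 2 / 4.
have hx0 : 0 <= x by rewrite /x !mulr_ge0 ?sqr_ge0 //; lra.
have hQ2 : Q ^+ 2 <= 1 by rewrite -(expr1n _ 2) ler_sqr ?nnegrE.
have hx1 : x <= 1 by rewrite /x; nra.
have h1 : Q - g * D <= Q * (1 - x) by rewrite /x; nra.
have h2 : (Q - g * D) ^+ 2 <= Q ^+ 2 * (1 - x) ^+ 2.
  by rewrite -exprMn ler_sqr // nnegrE mulr_ge0 //; lra.
have h3 : (1 - x) ^+ 2 * (1 + 2 * x) <= 1.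
  have : 0 <= x ^+ 2 * (3 - 2 * x) by rewrite mulr_ge0 ?sqr_ge0 //; lra.
  nra.
have h4 : Q ^+ 2 * (g / 2) = 2 * x by rewrite /x; field.
have h5 : 0 <= (1 - x) ^+ 2 by apply: sqr_ge0.
apply: le_trans (_ : Q ^+ 2 * (1 - x) ^+ 2 * (1 + (g + v) / 2) <= _).
  by apply: ler_wpM2r => //; lra.
have -> : Q ^+ 2 * (1 - x) ^+ 2 * (1 + (g + v) / 2) =
    (1 - x) ^+ 2 * (Q ^+ 2 * (1 + v / 2)) + (1 - x) ^+ 2 * (Q ^+ 2 * (g / 2)) by ring.
rewrite h4; have : (1 - x) ^+ 2 * (Q ^+ 2 * (1 + v / 2)) <= (1 - x) ^+ 2.
  by rewrite -[X in _ <= X]mulr1; apply: ler_wpM2l.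
lra.
Qed.

Lemma pb_coll_var_le s : all in01 s -> pb_coll s ^+ 2 * (1 + pb_var s / 2) <= 1.
Proof.
elim: s => [|a s IH] /=.
  move=> _; rewrite /pb_coll big_ord1 pb_mass_nil /pb_var big_nil /=.
  by rewrite !expr1n mul0r addr0 mulr1.
move=> /andP[ha hs]; rewrite pb_coll_cons pb_var_cons.
apply: coll_step_le; rewrite ?pb_var_ge0 ?pb_coll_nash ?IH ?bern_var_ge0 ?bern_var_le //.
- by rewrite pb_coll_ge0 pb_coll_le1.
- by rewrite -pb_coll_cons pb_coll_ge0.
Qed.

Lemma pb_var_balanced_split s : all in01 s ->
  exists s1 s2, perm_eq s (s1 ++ s2) /\ `|pb_var s1 - pb_var s2| <= 4^-1.
Proof.
elim: s => [|a s IH] /=.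
  by move=> _; exists [::], [::]; split => //; rewrite /pb_var big_nil subrr normr0; lra.
move=> /andP[ha /IH[s1 [s2 [hp hv]]]].
have hg := bern_var_ge0 ha; have hg' := bern_var_le a.
have [h|h] := lerP (pb_var s1) (pb_var s2).
  exists (a :: s1), s2; rewrite /= perm_cons pb_var_cons; split => //.
  by move: hv; rewrite !ler_norml; lra.
exists s1, (a :: s2); split.
  by rewrite perm_sym -(cat1s a s2) perm_catCA /= perm_cons perm_sym.
by rewrite pb_var_cons; move: hv; rewrite !ler_norml; lra.
Qed.

Lemma pb_mass_cat_le s1 s2 k : pb_mass (s1 ++ s2) k <= (pb_coll s1 + pb_coll s2) / 2.
Proof.
rewrite /pb_mass /pb_poly big_cat coefM -/(pb_poly s1) -/(pb_poly s2).
apply: le_trans (_ : \sum_(j < k.+1)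
    (pb_mass s1 j ^+ 2 + pb_mass s2 (k - j)%N ^+ 2) / 2 <= _).
  apply: ler_sum => j _; have := sqr_ge0 (pb_mass s1 j - pb_mass s2 (k - j)%N).
  rewrite /pb_mass; nra.
rewrite -mulr_suml big_split /=.
have -> : \sum_(j < k.+1) pb_mass s2 (k - j)%N ^+ 2 = \sum_(j < k.+1) pb_mass s2 j ^+ 2.
  rewrite -(big_mkord xpredT (fun j => pb_mass s2 j ^+ 2)) big_rev_mkord subn0.
  by apply: eq_bigr => j _; rewrite subSS.
by have := sum_pb_mass_sqr_le s1 k.+1; have := sum_pb_mass_sqr_le s2 k.+1; lra.
Qed.

Lemma balanced_mass_le (l Q1 Q2 v1 v2 : R) : 0 <= l <= 1 -> l <= (Q1 + Q2) / 2 ->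
  0 <= Q1 -> 0 <= Q2 -> 0 <= v1 -> 0 <= v2 -> `|v1 - v2| <= 4^-1 ->
  Q1 ^+ 2 * (1 + v1 / 2) <= 1 -> Q2 ^+ 2 * (1 + v2 / 2) <= 1 ->
  l ^+ 2 * (v1 + v2) <= 8.
Proof.
move=> /andP[l0 l1] hl Q10 Q20 v10 v20 hv hQ1 hQ2.
have [hvs|hvs] := lerP (v1 + v2) 2^-1.
  have : l ^+ 2 <= 1 by rewrite -(expr1n _ 2) ler_sqr ?nnegrE.
  nra.
move: hv; rewrite ler_norml => /andP[hv hv'].
have hQ1' : Q1 ^+ 2 * (1 + (v1 + v2) / 8) <= 1.
  by apply: le_trans hQ1; apply: ler_wpM2l; rewrite ?sqr_ge0 //; lra.
have hQ2' : Q2 ^+ 2 * (1 + (v1 + v2) / 8) <= 1.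
  by apply: le_trans hQ2; apply: ler_wpM2l; rewrite ?sqr_ge0 //; lra.
have hsq : l ^+ 2 <= (Q1 ^+ 2 + Q2 ^+ 2) / 2.
  apply: le_trans (_ : ((Q1 + Q2) / 2) ^+ 2 <= _).
    by rewrite ler_sqr ?nnegrE //; lra.
  by have := sqr_ge0 (Q1 - Q2); lra.
have : l ^+ 2 * (1 + (v1 + v2) / 8) <= 1.
  apply: le_trans (_ : (Q1 ^+ 2 + Q2 ^+ 2) / 2 * (1 + (v1 + v2) / 8) <= _); last lra.
  by apply: ler_wpM2r => //; lra.
have := sqr_ge0 l; nra.
Qed.

Lemma pb_mass_sqr_var_le s k : all in01 s -> pb_mass s k ^+ 2 * pb_var s <= 8.
Proof.
move=> hs; have [s1 [s2 [hp hv]]] := pb_var_balanced_split hs.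
have hs12 : all in01 (s1 ++ s2) by rewrite -(perm_all _ hp).
have [hs1 hs2] : all in01 s1 /\ all in01 s2 by apply/andP; rewrite -all_cat.
have -> : pb_mass s k = pb_mass (s1 ++ s2) k by rewrite /pb_mass /pb_poly (perm_big _ hp).
rewrite /pb_var (perm_big _ hp) big_cat -!/(pb_var _).
apply: balanced_mass_le (pb_mass_cat_le _ _ _) _ _ _ _ hv _ _;
  by [rewrite pb_mass_ge0 ?pb_mass_le1 | exact: pb_coll_ge0 | exact: pb_var_ge0
     | exact: pb_coll_var_le].
Qed.

End CollisionProbability.

Section BCVConstant.
Context {R : realType}.
Implicit Types (s : seq R).

Definition bcv_set : set R := [set x : R | exists (m : nat) (p : 'I_m -> R),
  (forall i, 0 <= p i <= 1) /\ 0 < pvar p /\ x = pmax p * Num.sqrt (pvar p)].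

Lemma eta_BCVE : eta_BCV = sup bcv_set.
Proof. by []. Qed.

Lemma map_nth_enum_ord s : [seq nth 0 s i | i : 'I_(size s) <- enum 'I_(size s)] = s.
Proof. by rewrite -[in RHS](mkseq_nth 0 s) /mkseq -val_enum_ord -map_comp. Qed.

Lemma pb_mass_le_pmax s k : pb_mass s k <= pmax (fun i : 'I_(size s) => nth 0 s i).
Proof.
have [/pb_mass_gt_size ->|hk] := ltnP (size s) k; first exact: bigmax_ge_id.
rewrite -[s in pb_mass s]map_nth_enum_ord -pbinE.
exact: (le_bigmax _ _ (Ordinal (hk : k < (size s).+1)%N)).
Qed.

Lemma pmax_sqrt_pvar_le n (p : 'I_n -> R) : (forall i, in01 (p i)) -> 0 < pvar p ->
  pmax p * Num.sqrt (pvar p) <= 3.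
Proof.
move=> hp hv; have hsv : 0 < Num.sqrt (pvar p) by rewrite sqrtr_gt0.
rewrite -ler_pdivlMr //; apply: bigmax_le => [|k _]; first by rewrite divr_ge0 ?ltW.
rewrite ler_pdivlMr // pbinE.
have := pb_mass_sqr_var_le k (all_in01_map hp); rewrite -pvarE.
have := pb_mass_ge0 k (all_in01_map hp); have := sqr_sqrtr (ltW hv).
set l := pb_mass _ k; set r := Num.sqrt _ => hr2 l0 hl.
have : (l * r) ^+ 2 <= 3 ^+ 2 by rewrite exprMn hr2; lra.
by rewrite ler_sqr ?nnegrE ?ler0n // mulr_ge0 // ltW.
Qed.

Lemma has_sup_bcv_set : has_sup bcv_set.
Proof.
split.
  exists (pmax (fun _ : 'I_1 => 2^-1 : R) * Num.sqrt (pvar (fun _ : 'I_1 => 2^-1 : R))).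
  exists 1%N, (fun _ => 2^-1); split; first by move=> _; apply/andP; split; lra.
  by split => //; rewrite /pvar big_ord1; lra.
by exists 3 => _ [m [p [hp [hv ->]]]]; apply: pmax_sqrt_pvar_le.
Qed.

Lemma pb_mass_sqrt_var_le_eta s k : all in01 s -> 0 < pb_var s ->
  pb_mass s k * Num.sqrt (pb_var s) <= eta_BCV.
Proof.
move=> hs hv; pose p i := nth 0 s (i : 'I_(size s)).
have hp i : in01 (p i) by apply: (allP hs); rewrite mem_nth.
have hpv : pvar p = pb_var s by rewrite pvarE map_nth_enum_ord.
rewrite eta_BCVE; apply: le_trans (sup_upper_bound has_sup_bcv_set _); last first.
  by exists (size s), p; rewrite hpv.
by apply: ler_wpM2r; [exact: sqrtr_ge0 | exact: pb_mass_le_pmax].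
Qed.

Lemma C_BCV_ge0 : 0 <= C_BCV :> R.
Proof. exact: sqrtr_ge0. Qed.

Lemma C_BCV_sqr : C_BCV ^+ 2 = 5 / 4 + eta_BCV ^+ 2 :> R.
Proof. by rewrite /C_BCV sqr_sqrtr // addr_ge0 ?sqr_ge0 //; lra. Qed.

(* Combines [P(S = k) <= 1] with [P(S = k) * sqrt Var <= eta_BCV]. *)
Lemma pb_mass_sqr_le_C s k : all in01 s ->
  pb_mass s k ^+ 2 * (pb_var s + 5 / 4) <= C_BCV ^+ 2.
Proof.
move=> hs; rewrite C_BCV_sqr.
have l0 := pb_mass_ge0 k hs; have l1 := pb_mass_le1 k hs.
have hl2 : pb_mass s k ^+ 2 <= 1 by rewrite -(expr1n _ 2) ler_sqr ?nnegrE.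
have [hv|] := ltrP 0 (pb_var s); last first.
  rewrite le_eqVlt ltNge pb_var_ge0 // orbF => /eqP ->.
  by have := sqr_ge0 (@eta_BCV R); lra.
have := pb_mass_sqrt_var_le_eta k hs hv; have := sqr_sqrtr (ltW hv).
set r := Num.sqrt _ => hr2 hle.
have hlr : 0 <= pb_mass s k * r by rewrite mulr_ge0 ?sqrtr_ge0.
have : (pb_mass s k * r) ^+ 2 <= eta_BCV ^+ 2.
  by rewrite ler_sqr ?nnegrE // (le_trans hlr).
rewrite exprMn hr2; lra.
Qed.

Lemma pb_mass_le_C s k : all in01 s -> pb_mass s k <= C_BCV / Num.sqrt (pb_var s + 5 / 4).
Proof.
move=> hs; have hv : 0 < pb_var s + 5 / 4 by have := pb_var_ge0 hs; lra.
rewrite ler_pdivlMr ?sqrtr_gt0 //.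
have : (pb_mass s k * Num.sqrt (pb_var s + 5 / 4)) ^+ 2 <= C_BCV ^+ 2.
  by rewrite exprMn (sqr_sqrtr (ltW hv)) pb_mass_sqr_le_C.
by rewrite ler_sqr ?nnegrE ?C_BCV_ge0 // mulr_ge0 ?sqrtr_ge0 ?pb_mass_ge0.
Qed.

End BCVConstant.

Section Unimodality.
Context {R : realType}.
Implicit Types (a : R) (s : seq R).

Lemma diff1_pb_mass_cons a s k : diff1 (pb_mass (a :: s)) k =
  (1 - a) * diff1 (pb_mass s) k + a * shift1 (diff1 (pb_mass s)) k.
Proof. by rewrite /diff1; case: k => [|k] /=; rewrite !pb_mass_cons /=; ring. Qed.

(* Adding a summand replaces the difference sequence by a convex combination of
   itself and its shift, which keeps a single sign change. *)
Lemma pb_mass_unimodal s : all in01 s -> exists m,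
  (forall k, (k <= m)%N -> 0 <= diff1 (pb_mass s) k) /\
  (forall k, (m < k)%N -> diff1 (pb_mass s) k <= 0).
Proof.
elim: s => [|a s IH] /=.
  move=> _; exists 0%N; split=> -[|k] //= _; rewrite /diff1 /= !pb_mass_nil /=; first lra.
  by case: k => [|k] /=; lra.
move=> /andP[/andP[a0 a1] /IH[m [hup hdn]]].
have hpu k : (k <= m)%N -> 0 <= shift1 (diff1 (pb_mass s)) k.
  by case: k => [|k] //= hk; apply/hup/ltnW.
have hpd k : (m.+1 < k)%N -> shift1 (diff1 (pb_mass s)) k <= 0.
  by case: k => [|k] //= hk; apply: hdn.
have hu k : (k <= m)%N -> 0 <= diff1 (pb_mass (a :: s)) k.
  move=> hk; rewrite diff1_pb_mass_cons.
  by have := hup k hk; have := hpu k hk; nra.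
have hd k : (m.+1 < k)%N -> diff1 (pb_mass (a :: s)) k <= 0.
  move=> hk; rewrite diff1_pb_mass_cons.
  by have := hdn k (ltnW hk); have := hpd k hk; nra.
have [h|h] := lerP 0 (diff1 (pb_mass (a :: s)) m.+1).
  by exists m.+1; split => // k; rewrite leq_eqVlt => /orP[/eqP->|/hu].
by exists m; split => // k; rewrite leq_eqVlt => /orP[/eqP<-|/hd]; first exact: ltW.
Qed.

End Unimodality.

Section TotalVariation.
Context {R : realType} {n : nat}.
Implicit Types (p q r z : 'I_n -> R).

Lemma TV_pb_triangle p q r : TV_pb p r <= TV_pb p q + TV_pb q r.
Proof.
rewrite /TV_pb -mulrDr; apply: ler_wpM2l; first by rewrite invr_ge0.
by rewrite -big_split; apply: ler_sum => k _; apply: ler_distD.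
Qed.

Lemma TV_pb_chain (z : nat -> 'I_n -> R) M :
  TV_pb (z 0%N) (z M) <= \sum_(t < M) TV_pb (z t) (z t.+1).
Proof.
elim: M => [|M IH].
  by rewrite big_ord0 /TV_pb big1 ?mulr0 // => k _; rewrite subrr normr0.
by rewrite big_ord_recr /=; apply: le_trans (TV_pb_triangle _ (z M) _) _; rewrite lerD2r.
Qed.

Lemma pvar_bigD1 z (i0 : 'I_n) :
  pvar z = z i0 * (1 - z i0) + pb_var [seq z l | l <- enum [pred l | l != i0]].
Proof. by rewrite /pvar (bigD1 i0) //= /pb_var big_map big_enum. Qed.

Lemma pbin_bigD1 z (i0 : 'I_n) k : pbin z k =
  (bern_poly (z i0) * pb_poly [seq z l | l <- enum [pred l | l != i0]])`_k.
Proof. by rewrite pbin_coef_prod (bigD1 i0) //= /pb_poly big_map big_enum. Qed.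

Lemma TV_pb_update_le z z' (i0 : 'I_n) e : (forall l, in01 (z l)) ->
  (forall l, l != i0 -> z' l = z l) -> z' i0 = z i0 + e ->
  TV_pb z z' <= `|e| * (C_BCV / Num.sqrt (pvar z + 1)).
Proof.
move=> hz hz' he; set s := [seq z l | l <- enum [pred l | l != i0]].
have hs : all in01 s by apply/allP => a /mapP[l _ ->].
have Es : [seq z' l | l <- enum [pred l | l != i0]] = s.
  by apply/eq_in_map => l; rewrite mem_enum inE => /hz'.
have Ed k : pbin z k - pbin z' k = e * diff1 (pb_mass s) k.
  by rewrite !(pbin_bigD1 _ i0) -/s Es he !coef_bern_polyM /diff1 /pb_mass; ring.
have [m [hup hdn]] := pb_mass_unimodal hs.
rewrite /TV_pb; under eq_bigr do rewrite Ed normrM.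
rewrite -mulr_sumr mulrCA; apply: ler_wpM2l => //.
apply: le_trans (_ : pb_mass s m <= _).
  have := sum_abs_diff1_unimodal n.+1 (fun k => pb_mass_ge0 k hs) hup hdn; lra.
apply: le_trans (pb_mass_le_C m hs) _; rewrite (pvar_bigD1 _ i0) -/s.
have := pb_var_ge0 hs; have := bern_var_ge0 (hz i0); have := bern_var_le (z i0).
by move=> *; apply: ler_div_sqrt; rewrite ?C_BCV_ge0 //; lra.
Qed.

End TotalVariation.

Section RiemannSums.
Context {R : realType}.
Implicit Types (a b t A B : R) (N j : nat).

Definition lerp a b t : R := a + t * (b - a).
Definition grid N j : R := j%:R / N%:R.

Lemma grid_ge0 N j : 0 <= grid N j.
Proof. by rewrite divr_ge0 ?ler0n. Qed.

Lemma grid_le1 N j : (0 < N)%N -> (j <= N)%N -> grid N j <= 1.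
Proof. by move=> N0 hj; rewrite ler_pdivrMr ?ltr0n // mul1r ler_nat. Qed.

Lemma grid_succ N j : (0 < N)%N -> grid N j.+1 = grid N j + N%:R^-1.
Proof. by move=> N0; rewrite /grid -addn1 natrD mulrDl mul1r. Qed.

Lemma lerp_grid0 a b N : lerp a b (grid N 0) = a.
Proof. by rewrite /lerp /grid !mul0r addr0. Qed.

Lemma lerp_gridN a b N : (0 < N)%N -> lerp a b (grid N N) = b.
Proof.
by move=> N0; rewrite /lerp /grid divff ?pnatr_eq0 -?lt0n // mul1r addrC subrK.
Qed.

Lemma lerp_grid_succ a b N j : (0 < N)%N ->
  lerp a b (grid N j.+1) = lerp a b (grid N j) + (b - a) / N%:R.
Proof. by move=> N0; rewrite /lerp grid_succ // mulrDl addrA [_ / _]mulrC. Qed.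

Lemma lerp_ge (c a b t : R) : 0 <= t <= 1 -> c <= a -> c <= b -> c <= lerp a b t.
Proof. by move=> /andP[t0 t1] ca cb; rewrite /lerp; nra. Qed.

Lemma lerp_le (c a b t : R) : 0 <= t <= 1 -> a <= c -> b <= c -> lerp a b t <= c.
Proof. by move=> /andP[t0 t1] ac bc; rewrite /lerp; nra. Qed.

Lemma sum_trapezoid_sqrt_lerp A B N : 1 <= A -> 1 <= B -> (0 < N)%N ->
  \sum_(j < N) 2 * N%:R^-1 /
    (Num.sqrt (lerp A B (grid N j)) + Num.sqrt (lerp A B (grid N j.+1)))
  = 2 / (Num.sqrt A + Num.sqrt B).
Proof.
move=> A1 B1 N0; set S := fun j => Num.sqrt (lerp A B (grid N j)).
have hN : N%:R != 0 :> R by rewrite pnatr_eq0 -lt0n.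
have M1 j : (j <= N)%N -> 1 <= lerp A B (grid N j).
  by move=> hj; rewrite lerp_ge ?grid_ge0 ?grid_le1.
have S1 j : (j <= N)%N -> 1 <= S j by move=> /M1/sqrt_ge1.
have SA : S 0%N = Num.sqrt A by rewrite /S lerp_grid0.
have SB : S N = Num.sqrt B by rewrite /S lerp_gridN.
have sA := sqrt_ge1 A1; have sB := sqrt_ge1 B1.
have [<-|hAB] := eqVneq A B.
  under eq_bigr => j _ do rewrite /S /lerp subrr !mulr0 !addr0.
  by rewrite sumr_const card_ord -mulr_natr; field; rewrite hN andbT; apply/eqP; lra.
have hBA : B - A != 0 by rewrite subr_eq0 eq_sym.
have E (j : 'I_N) : 2 * N%:R^-1 / (S j + S j.+1) = 2 / (B - A) * (S j.+1 - S j).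
  have hj1 := S1 _ (ltnW (ltn_ord j)); have hj2 := S1 _ (ltn_ord j).
  have hsq k : (k <= N)%N -> S k ^+ 2 = lerp A B (grid N k).
    by move=> hk; rewrite sqr_sqrtr //; have := M1 k hk; lra.
  have : (S j.+1 - S j) * (S j + S j.+1) = (B - A) / N%:R.
    rewrite (addrC (S j)) -subr_sqr !hsq ?(ltnW (ltn_ord j)) //.
    by rewrite lerp_grid_succ // addrC addKr.
  move=> hprod; have -> : S j.+1 - S j = (B - A) / N%:R / (S j + S j.+1).
    by rewrite -hprod; field; lra.
  by field; rewrite hN hBA !andbT; apply/eqP; lra.
rewrite (eq_bigr _ (fun (j : 'I_N) _ => E j)) -mulr_sumr.
rewrite -(big_mkord xpredT (fun j => S j.+1 - S j)) telescope_sumr // SA SB.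
have hsBA : Num.sqrt B - Num.sqrt A != 0.
  by rewrite subr_eq0 eqr_sqrt 1?eq_sym //; lra.
have -> : B - A = (Num.sqrt B - Num.sqrt A) * (Num.sqrt B + Num.sqrt A).
  by rewrite -subr_sqr !sqr_sqrtr //; lra.
by field; rewrite hsBA andbT; apply/eqP; lra.
Qed.

Lemma riemann_inv_sqrt_lerp_le A B eps N : 1 <= A -> 1 <= B -> (0 < N)%N ->
  0 <= eps <= 2^-1 ->
  \sum_(j < N) N%:R^-1 / Num.sqrt (lerp A B (grid N j) - eps)
  <= 2 / (Num.sqrt A + Num.sqrt B) + 2 * eps + `|B - A| / N%:R.
Proof.
move=> A1 B1 N0 heps; set h : R := N%:R^-1; set M := fun j => lerp A B (grid N j).
have hN : N%:R != 0 :> R by rewrite pnatr_eq0 -lt0n.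
have h0 : 0 <= h by rewrite invr_ge0 ler0n.
have M1 j : (j <= N)%N -> 1 <= M j by move=> hj; rewrite lerp_ge ?grid_ge0 ?grid_le1.
apply: le_trans (_ : \sum_(j < N) (2 * h / (Num.sqrt (M j) + Num.sqrt (M j.+1))
    + (h ^+ 2 * `|B - A| + h * (2 * eps))) <= _).
  apply: ler_sum => j _.
  have hj1 := M1 _ (ltnW (ltn_ord j)); have hj2 := M1 _ (ltn_ord j).
  have hstep : Num.sqrt (M j.+1) ^+ 2 - Num.sqrt (M j) ^+ 2 = h * (B - A).
    rewrite (sqr_sqrtr (le_trans ler01 hj1)) (sqr_sqrtr (le_trans ler01 hj2)).
    by rewrite /M lerp_grid_succ // addrC addKr mulrC.
  have := left_riemann_term_le (sqrt_ge1 hj1) (sqrt_ge1 hj2) h0 hstep.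
  have : h / Num.sqrt (M j - eps) <= h * ((Num.sqrt (M j))^-1 + 2 * eps).
    by apply: ler_wpM2l => //; apply: inv_sqrt_sub_le.
  rewrite -/(M j) mulrDr; lra.
rewrite big_split /= sum_trapezoid_sqrt_lerp // sumr_const card_ord.
have -> : (h ^+ 2 * `|B - A| + h * (2 * eps)) *+ N = `|B - A| * h + 2 * eps.
  by rewrite -mulr_natr /h; field.
lra.
Qed.

End RiemannSums.

Section Interpolation.
Context {R : realType} {n : nat}.
Implicit Types (p q : 'I_n -> R) (N j : nat).

Lemma bern_var_lerp_ge (x y t : R) : 0 <= t <= 1 ->
  lerp (x * (1 - x)) (y * (1 - y)) t <= lerp x y t * (1 - lerp x y t).
Proof.
move=> /andP[t0 t1]; rewrite /lerp.
have -> : (x + t * (y - x)) * (1 - (x + t * (y - x))) =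
  x * (1 - x) + t * (y * (1 - y) - x * (1 - x)) + t * (1 - t) * (y - x) ^+ 2 by ring.
by rewrite lerDl mulr_ge0 ?sqr_ge0 ?mulr_ge0 //; lra.
Qed.

Lemma bern_var_shift_ge (x e : R) : in01 x -> in01 (x + e) ->
  x * (1 - x) - `|e| <= (x + e) * (1 - (x + e)).
Proof.
move=> /andP[x0 x1] /andP[xe0 xe1].
have -> : (x + e) * (1 - (x + e)) = x * (1 - x) + e * (1 - 2 * x - e) by ring.
have [e0|e0] := lerP 0 e.
  rewrite ger0_norm //; have : 0 <= e * (2 - 2 * x - e) by apply: mulr_ge0; lra.
  nra.
rewrite ltr0_norm //; have : 0 <= - e * (2 * x + e) by apply: mulr_ge0; lra.
nra.
Qed.

Lemma pvar_add1_ge1 p : (forall l, in01 (p l)) -> 1 <= pvar p + 1.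
Proof. by move=> hp; rewrite lerDr pvarE pb_var_ge0 ?all_in01_map. Qed.

Definition seg_point p q N j : 'I_n -> R := fun l => lerp (p l) (q l) (grid N j).

Definition seg_hybrid p q N j (i : nat) : 'I_n -> R :=
  fun l => if (l < i)%N then seg_point p q N j.+1 l else seg_point p q N j l.

Section Segment.
Variables (p q : 'I_n -> R) (N : nat).
Hypotheses (hp : forall l, in01 (p l)) (hq : forall l, in01 (q l)) (N0 : (0 < N)%N).

Let Delta := \sum_(l < n) `|p l - q l|.
Let eps := Delta / N%:R.

Let A := pvar p + 1.
Let B := pvar q + 1.

Lemma seg_point_in01 j l : (j <= N)%N -> in01 (seg_point p q N j l).
Proof.
move=> hj; have ht : 0 <= @grid R N j <= 1 by rewrite grid_ge0 grid_le1.
have /andP[p0 p1] := hp l; have /andP[q0 q1] := hq l.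
by apply/andP; split; [apply: lerp_ge | apply: lerp_le].
Qed.

Lemma seg_hybrid_in01 j i l : (j < N)%N -> in01 (seg_hybrid p q N j i l).
Proof.
by move=> hj; rewrite /seg_hybrid; case: ifP => _; apply: seg_point_in01; rewrite // ltnW.
Qed.

Lemma pvar_seg_point_ge j : (j <= N)%N ->
  lerp (pvar p) (pvar q) (grid N j) <= pvar (seg_point p q N j).
Proof.
move=> hj; have ht : 0 <= @grid R N j <= 1 by rewrite grid_ge0 grid_le1.
rewrite {1}/lerp /pvar -sumrB mulr_sumr -big_split /=.
by apply: ler_sum => l _; apply: bern_var_lerp_ge.
Qed.

Lemma pvar_seg_hybrid_ge j i : (j < N)%N ->
  pvar (seg_point p q N j) - eps <= pvar (seg_hybrid p q N j i).
Proof.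
move=> hj; rewrite /eps /Delta mulr_suml /pvar -sumrB; apply: ler_sum => l _.
rewrite /seg_hybrid; case: ifP => _; last by rewrite lerBlDr lerDl divr_ge0.
have -> : seg_point p q N j.+1 l = seg_point p q N j l + (q l - p l) / N%:R.
  by rewrite /seg_point lerp_grid_succ.
have -> : `|p l - q l| / N%:R = `|(q l - p l) / N%:R|.
  by rewrite normrM normfV distrC (ger0_norm (ler0n _ _)).
apply: bern_var_shift_ge; first by rewrite seg_point_in01 // ltnW.
by rewrite -lerp_grid_succ //; apply: seg_point_in01.
Qed.

Lemma TV_pb_seg_hybrid_le j (i : 'I_n) : (j < N)%N -> eps <= 2^-1 ->
  TV_pb (seg_hybrid p q N j i) (seg_hybrid p q N j i.+1) <=
  `|p i - q i| / N%:R * (C_BCV / Num.sqrt (lerp A B (grid N j) - eps)).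
Proof.
move=> hj heps.
have hz' l : l != i -> seg_hybrid p q N j i.+1 l = seg_hybrid p q N j i l.
  by move=> hl; rewrite /seg_hybrid ltnS leq_eqVlt (_ : _ == _ = false) //; apply: negbTE.
have he : seg_hybrid p q N j i.+1 i = seg_hybrid p q N j i i + (q i - p i) / N%:R.
  by rewrite /seg_hybrid ltnSn ltnn /seg_point lerp_grid_succ.
apply: le_trans (TV_pb_update_le (fun l => seg_hybrid_in01 i l hj) hz' he) _.
rewrite normrM normfV (ger0_norm (ler0n _ _)) distrC.
apply: ler_wpM2l; first by rewrite divr_ge0.
have ht : 0 <= @grid R N j <= 1 by rewrite grid_ge0 grid_le1 // ltnW.
have hA := pvar_add1_ge1 hp; have hB := pvar_add1_ge1 hq.
have hM : 1 <= lerp A B (grid N j) by apply: lerp_ge.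
have hD : 0 <= eps by rewrite /eps divr_ge0 ?sumr_ge0.
apply: ler_div_sqrt; rewrite ?C_BCV_ge0 //; first lra.
have := pvar_seg_hybrid_ge i hj; have := pvar_seg_point_ge (ltnW hj).
by rewrite /lerp /A /B; lra.
Qed.

Lemma TV_pb_seg_point_le j : (j < N)%N -> eps <= 2^-1 ->
  TV_pb (seg_point p q N j) (seg_point p q N j.+1) <=
  Delta / N%:R * (C_BCV / Num.sqrt (lerp A B (grid N j) - eps)).
Proof.
move=> hj heps.
have E0 : seg_hybrid p q N j 0 = seg_point p q N j.
  by apply/funext => l; rewrite /seg_hybrid ltn0.
have En : seg_hybrid p q N j n = seg_point p q N j.+1.
  by apply/funext => l; rewrite /seg_hybrid ltn_ord.
rewrite -E0 -En; apply: le_trans (TV_pb_chain _ n) _.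
rewrite /Delta !mulr_suml; apply: ler_sum => i _.
exact: TV_pb_seg_hybrid_le i hj heps.
Qed.

Lemma TV_pb_le_riemann : 2 * Delta < N%:R ->
  TV_pb p q <= 2 * C_BCV * Delta / (Num.sqrt A + Num.sqrt B)
               + C_BCV * Delta * (2 * Delta + `|B - A|) / N%:R.
Proof.
move=> hN; have Npos : 0 < N%:R :> R by rewrite ltr0n.
have heps : eps <= 2^-1 by rewrite /eps ler_pdivrMr //; lra.
have hA := pvar_add1_ge1 hp; have hB := pvar_add1_ge1 hq.
have hAB : 0 < Num.sqrt A + Num.sqrt B by have := sqrt_ge1 hA; have := sqrt_ge1 hB; lra.
have -> : TV_pb p q = TV_pb (seg_point p q N 0) (seg_point p q N N).
  by congr TV_pb; apply/funext => l; rewrite /seg_point ?lerp_grid0 ?lerp_gridN.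
apply: le_trans (TV_pb_chain _ N) _.
apply: le_trans (ler_sum _ (fun (j : 'I_N) _ => TV_pb_seg_point_le (ltn_ord j) heps)) _.
have -> : \sum_(j < N) Delta / N%:R * (C_BCV / Num.sqrt (lerp A B (grid N j) - eps))
    = C_BCV * Delta * \sum_(j < N) N%:R^-1 / Num.sqrt (lerp A B (grid N j) - eps).
  by rewrite mulr_sumr; apply: eq_bigr => j _; ring.
have -> : 2 * C_BCV * Delta / (Num.sqrt A + Num.sqrt B)
    + C_BCV * Delta * (2 * Delta + `|B - A|) / N%:R = C_BCV * Delta *
    (2 / (Num.sqrt A + Num.sqrt B) + 2 * eps + `|B - A| / N%:R).
  by rewrite /eps; field; rewrite !lt0r_neq0.
apply: ler_wpM2l; first by rewrite mulr_ge0 ?C_BCV_ge0 ?sumr_ge0.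
apply: riemann_inv_sqrt_lerp_le; rewrite // heps andbT.
by rewrite /eps divr_ge0 ?sumr_ge0.
Qed.

End Segment.

End Interpolation.

Unset Implicit Arguments.

Theorem theorem6 (R : realType) (n : nat) (p q : 'I_n -> R) :
  (1 <= n)%N ->
  (forall i, 0 <= p i <= 1) -> (forall i, 0 <= q i <= 1) ->
  TV_pb p q <=
    2 * C_BCV * (\sum_(i < n) `|p i - q i|) /
    (Num.sqrt (pvar p + 1) + Num.sqrt (pvar q + 1)).
Proof.
move=> _ hp hq; set Delta := \sum_(i < n) `|p i - q i|.
have hD : 0 <= Delta by rewrite sumr_ge0.
apply: (@le_add_div_nat _ _ _ (C_BCV * Delta * (2 * Delta + `|pvar q + 1 - (pvar p + 1)|))
  (2 * Delta)); first by rewrite !mulr_ge0 ?C_BCV_ge0 ?addr_ge0 ?mulr_ge0.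
- lra.
- move=> N hN; have N0 : (0 < N)%N by rewrite -(ltr0n R); lra.
  exact: TV_pb_le_riemann hp hq N0 hN.
Qed.
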